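(* Let $1\le k<n$ and let $X$ be a fixed (non-random) real $n\times k$ matrix of full column rank $k$. Let $\mathbf{F}_2$ be the class of all distributions $F$ of the random vector $Y=X\beta+e$ in $\mathbb{R}^n$, where $\beta$ ranges over $\mathbb{R}^k$ and the distribution of the error vector $e$ ranges over all distributions on $\mathbb{R}^n$ with $E e'e<\infty$, $Ee=0$ and $Eee'=\sigma^2\Sigma$ for some $0<\sigma^2<\infty$ and some symmetric positive definite $n\times n$ matrix $\Sigma$. For $F\in\mathbf{F}_2$, let $\beta(F)$ denote the (unique) $\beta\in\mathbb{R}^k$ with $E_F Y = X\beta$. Suppose $\hat\beta:\mathbb{R}^n\to\mathbb{R}^k$ is a Borel-measurable function such that, for every $F\in\mathbf{F}_2$, $E_F\hat\beta(Y)$ exists and $E_F\hat\beta(Y)=\beta(F)$. Then $\hat\beta$ is linear, i.e., there is a $k\times n$ real matrix $A$ with $\hat\beta(y)=Ay$ for all $y\in\mathbb{R}^n$.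
   Context: $E_F$ denotes expectation when $Y$ has distribution $F$. Since $X$ has full column rank, $\beta(F)$ is uniquely determined by $F$. *)

From HB Require Import structures.
From mathcomp Require Import all_boot all_order all_algebra.
From mathcomp Require Import all_classical all_reals all_analysis.
Set Implicit Arguments. Unset Strict Implicit. Unset Printing Implicit Defensive.
Import Order.TTheory GRing.Theory Num.Theory.
Import numFieldNormedType.Exports.
Local Open Scope classical_set_scope.
Local Open Scope ring_scope.

Definition Rvec (R : realType) (n : nat) : measurableType _ :=
  g_sigma_algebraType (@open 'cV[R]_n).

Definition sym_posdef (R : realType) (n : nat) (S : 'M[R]_n) : Prop :=
  S^T = S /\ forall v : 'cV[R]_n, v != 0 -> 0 < (v^T *m S *m v) 0 0.

Definition admissible_error (R : realType) (n : nat)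
    (Pe : probability (Rvec R n) R) : Prop :=
  [/\ Pe.-integrable [set: Rvec R n] (fun e : Rvec R n => ((e^T *m e) 0 0)%:E),
      (forall i : 'I_n, (\int[Pe]_e (e i 0)%:E = 0)%E) &
      exists s2 : R, exists S : 'M[R]_n, [/\ 0 < s2, sym_posdef S &
        forall i j : 'I_n,
          (\int[Pe]_e (e i 0 * e j 0)%:E = (s2 * S i j)%:E)%E]].

From HB Require Import structures.
From mathcomp Require Import all_boot all_order all_algebra.
From mathcomp Require Import all_classical all_reals all_analysis measurable_realfun.
From mathcomp Require Import lra ring.
Set Implicit Arguments. Unset Strict Implicit. Unset Printing Implicit Defensive.
Import Order.TTheory GRing.Theory Num.Theory.
Import numFieldNormedType.Exports.
Local Open Scope classical_set_scope.
Local Open Scope ring_scope.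

(* A
   centered law with finite support may have a singular covariance, but its
   half-and-half mixture with the uniform law on {+-e_i} does not, so g also
   integrates to zero against every finitely supported centered law.  The
   two-point laws then give g(-(t x)) = -(t g(x)) for t > 0, and the
   three-point laws {x, y, -(x + y)} give additivity: g is linear. *)

Section FiniteDistribution.
Variables (R : realFieldType) (n : nat).
Implicit Types (s : seq (R * 'cV[R]_n)) (F : 'cV[R]_n -> R) (v : 'cV[R]_n).

(* A finitely supported law on 'cV_n is a list of (weight, atom) pairs. *)
Definition fin_mean s F := \sum_(p <- s) p.1 * F p.2.

Definition fin_centered s : Prop :=
  [/\ all (fun p => 0 <= p.1) s, fin_mean s (fun=> 1) = 1 &
      forall i, fin_mean s (fun z => z i 0) = 0].

Lemma fin_mean_ge0 s F :
  all (fun p => 0 <= p.1) s -> (forall z, 0 <= F z) -> 0 <= fin_mean s F.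
Proof.
move=> /allP s_ge0 F_ge0; rewrite /fin_mean big_seq.
by apply: sumr_ge0 => p /s_ge0 p_ge0; exact: mulr_ge0.
Qed.

Definition fin_mix s1 s2 := [seq (p.1 / 2, p.2) | p <- s1 ++ s2].

Lemma fin_mean_mix s1 s2 F :
  fin_mean (fin_mix s1 s2) F = (fin_mean s1 F + fin_mean s2 F) / 2.
Proof.
rewrite /fin_mean big_map big_cat mulrDl !mulr_suml.
by congr (_ + _); apply: eq_bigr => p _; rewrite mulrAC.
Qed.

Lemma fin_centered_mix s1 s2 :
  fin_centered s1 -> fin_centered s2 -> fin_centered (fin_mix s1 s2).
Proof.
move=> [s1_ge0 s1_mass s1_mean] [s2_ge0 s2_mass s2_mean]; split.
- have half_ge0 (p : R * 'cV[R]_n) : 0 <= p.1 -> 0 <= p.1 / 2.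
    by move=> p_ge0; rewrite divr_ge0.
  by rewrite all_map all_cat (sub_all half_ge0 s1_ge0) (sub_all half_ge0 s2_ge0).
- by rewrite fin_mean_mix s1_mass s2_mass; field.
- by move=> i; rewrite fin_mean_mix s1_mean s2_mean addr0 mul0r.
Qed.

Definition second_moment s : 'M[R]_n := \sum_(p <- s) p.1 *: (p.2 *m p.2^T).

Lemma second_momentE s i j :
  second_moment s i j = fin_mean s (fun z => z i 0 * z j 0).
Proof.
rewrite summxE; apply: eq_bigr => p _.
by rewrite !mxE big_ord1 !mxE.
Qed.

Lemma tr_second_moment s : (second_moment s)^T = second_moment s.
Proof.
apply/matrixP => i j; rewrite mxE !second_momentE.
by rewrite /fin_mean; apply: eq_bigr => p _; rewrite [_ * p.2 i 0]mulrC.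
Qed.

Lemma second_moment_quad s v :
  (v^T *m second_moment s *m v) 0 0 = fin_mean s (fun z => (v^T *m z) 0 0 ^+ 2).
Proof.
rewrite mulmx_sumr mulmx_suml summxE; apply: eq_bigr => p _.
rewrite -scalemxAr -scalemxAl mxE; congr (_ * _).
rewrite mulmxA -[_ *m v]mulmxA mxE big_ord1 expr2; congr (_ * _).
by rewrite -(trmxK v) -trmx_mul mxE trmxK.
Qed.

Definition sign_basis : seq (R * 'cV[R]_n) :=
  [seq ((n.*2)%:R^-1, x)
    | i <- enum 'I_n, x <- [:: delta_mx i 0; - delta_mx i 0]].

Lemma fin_mean_sign_basis F : fin_mean sign_basis F =
  (n.*2)%:R^-1 * \sum_i (F (delta_mx i 0) + F (- delta_mx i 0)).
Proof.
rewrite /fin_mean big_allpairs_dep big_enum /= mulr_sumr.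
by apply: eq_bigr => i _; rewrite !big_cons big_nil addr0 mulrDr.
Qed.

Lemma sign_basis_centered : (0 < n)%N -> fin_centered sign_basis.
Proof.
move=> n_gt0; split.
- by apply/allP => _ /allpairsPdep[i [x [_ _ ->]]]; rewrite invr_ge0.
- rewrite fin_mean_sign_basis sumr_const card_ord -mulr2n -mulrnA mul2n.
  by rewrite mulVf // pnatr_eq0 double_eq0 -lt0n.
- move=> i; rewrite fin_mean_sign_basis big1 ?mulr0 // => j _.
  by rewrite [X in _ + X]mxE addrN.
Qed.

Lemma sign_basis_quad_gt0 v : v != 0 ->
  0 < fin_mean sign_basis (fun z => (v^T *m z) 0 0 ^+ 2).
Proof.
move=> /matrix0Pn[i0 [j0 v_i0]]; rewrite (ord1 j0) in v_i0.
have n_gt0 : (0 < n)%N := leq_ltn_trans (leq0n i0) (ltn_ord i0).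
have coordE (i : 'I_n) : (v^T *m (delta_mx i 0 : 'cV_n)) 0 0 = v i 0.
  by rewrite -colE !mxE.
rewrite fin_mean_sign_basis mulr_gt0 ?invr_gt0 ?ltr0n ?double_gt0 //.
under eq_bigr do rewrite mulmxN [X in _ + X ^+ 2]mxE sqrrN coordE.
rewrite (bigD1 i0) //= ltr_pwDl ?sumr_ge0 // => [|i _].
  by rewrite addr_gt0 // lt_def sqrf_eq0 v_i0 sqr_ge0.
by rewrite addr_ge0 // sqr_ge0.
Qed.

End FiniteDistribution.

Section CenteredNull.
Variables (R : realFieldType) (n : nat) (g : 'cV[R]_n -> R).
Hypothesis g_null : forall s, fin_centered s -> fin_mean s g = 0.

Lemma centered_null_oppZ t x : 0 < t -> g (- (t *: x)) = - (t * g x).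
Proof.
move=> t_gt0; have t1_neq0 : 1 + t != 0 by rewrite gt_eqF // addr_gt0.
set s := [:: (t / (1 + t), x); ((1 + t)^-1, - (t *: x))].
have s_centered : fin_centered s.
  split => /=.
  - by rewrite andbT divr_ge0 ?invr_ge0 ?ltW ?addr_gt0.
  - by rewrite /fin_mean !big_cons big_nil /=; field.
  - by move=> i; rewrite /fin_mean !big_cons big_nil /= !mxE; field.
have := g_null s_centered; rewrite /fin_mean !big_cons big_nil /= addr0.
have -> : t / (1 + t) * g x + (1 + t)^-1 * g (- (t *: x)) =
  (t * g x + g (- (t *: x))) / (1 + t) by field.
move/eqP; rewrite mulf_eq0 invr_eq0 (negbTE t1_neq0) orbF.
by rewrite addrC addr_eq0 => /eqP.
Qed.

Lemma centered_nullN x : g (- x) = - g x.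
Proof. by have := centered_null_oppZ x ltr01; rewrite scale1r !mul1r. Qed.

Lemma centered_nullZ t x : g (t *: x) = t * g x.
Proof.
case: (ltgtP t 0) => [t_lt0 | t_gt0 | ->].
- by rewrite -[t]opprK scaleNr centered_null_oppZ ?oppr_gt0 // !mulNr.
- by rewrite -[t *: x]opprK centered_nullN centered_null_oppZ // opprK.
- by have := centered_nullN 0; rewrite scale0r mul0r oppr0 => g0; lra.
Qed.

Lemma centered_nullD x y : g (x + y) = g x + g y.
Proof.
have three_neq0 : 3 != 0 :> R by rewrite pnatr_eq0.
pose s : seq (R * 'cV[R]_n) := [:: (3^-1, x); (3^-1, y); (3^-1, - (x + y))].
have s_centered : fin_centered s.
  split => /=.
  - by rewrite andbT invr_ge0 ler0n.
  - by rewrite /fin_mean !big_cons big_nil /=; field.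
  - by move=> i; rewrite /fin_mean !big_cons big_nil /= !mxE; field.
have := g_null s_centered; rewrite /fin_mean !big_cons big_nil /= addr0.
by rewrite centered_nullN => sum0; lra.
Qed.

Lemma centered_null_linear y : g y = \sum_i y i 0 * g (delta_mx i 0).
Proof.
have g0 : g 0 = 0 by rewrite -(scale0r 0) centered_nullZ mul0r.
rewrite {1}[y]matrix_sum_delta (big_morph g centered_nullD g0).
by apply: eq_bigr => i _; rewrite big_ord1 centered_nullZ.
Qed.

End CenteredNull.

Section FiniteProbability.
Variables (R : realType) (n : nat).
Implicit Types (s : seq (R * 'cV[R]_n)) (v : 'cV[R]_n).

Lemma continuous_measurable (f : 'cV[R]_n -> R) :
  continuous f -> measurable_fun [set: Rvec R n] (f : Rvec R n -> R).
Proof.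
move=> /continuousP f_cont.
apply: (measurability _ (measurable_realfun.RGenOpens.measurableE R)).
move=> _ [_ [a [b ->] <-]]; rewrite setTI.
by apply: sub_sigma_algebra; exact/f_cont/interval_open.
Qed.

Lemma coord_measurable (i : 'I_n) :
  measurable_fun [set: Rvec R n] (fun e : Rvec R n => e i 0).
Proof. exact: continuous_measurable (@coord_continuous R n 1 i 0). Qed.

Lemma sqr_norm_measurable :
  measurable_fun [set: Rvec R n] (fun e : Rvec R n => (e^T *m e) 0 0).
Proof.
rewrite (_ : (fun e => _) = fun e : Rvec R n => \sum_i e i 0 * e i 0).
  by apply: measurable_sum => i; apply: measurable_funM; exact: coord_measurable.
by apply/funext => e; rewrite mxE; apply: eq_bigr => i _; rewrite mxE.
Qed.

(* The absolute values make this a measure for every list; the weights are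
   nonnegative in all uses. *)
Definition fin_measure s : {measure set Rvec R n -> \bar R} :=
  msum (fun i => mscale `|(nth (0, 0) s i).1|%:nng
                   (@dirac _ (Rvec R n) (nth (0, 0) s i).2 R)) (size s).

Definition fin_prob s : probability (Rvec R n) R :=
  mnormalize (fin_measure s) \d_(0 : Rvec R n).

Lemma ge0_integral_fin_measure s (f : Rvec R n -> \bar R) :
  measurable_fun [set: Rvec R n] f -> (forall x, (0 <= f x)%E) ->
  (\int[fin_measure s]_x f x = \sum_(p <- s) `|p.1|%:E * f p.2)%E.
Proof.
move=> f_meas f_ge0.
rewrite ge0_integral_measure_sum // (big_nth (0, 0)) big_mkord.
apply: eq_bigr => i _.
by rewrite ge0_integral_mscale // integral_dirac // diracT mul1e.
Qed.

Lemma integral_fin_measure s (g : Rvec R n -> R) :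
  measurable_fun [set: Rvec R n] g ->
  (\int[fin_measure s]_x (g x)%:E = (\sum_(p <- s) `|p.1| * g p.2)%:E)%E.
Proof.
move=> /measurable_EFinP g_meas.
rewrite integralE !ge0_integral_fin_measure //; last 2 first.
- exact: measurable_funeneg.
- exact: measurable_funepos.
under eq_bigr do rewrite funeposE -EFin_max -EFinM.
under [X in (_ - X)%E]eq_bigr do rewrite funenegE -EFinN -EFin_max -EFinM.
rewrite !sumEFin -EFinB -sumrB; congr (_%:E); apply: eq_bigr => p _.
rewrite -mulrBr; congr (_ * _).
by case: (leP (g p.2) 0) => ?; case: (leP (- g p.2) 0) => ?; lra.
Qed.

Lemma fin_measure_setT s :
  fin_measure s [set: Rvec R n] = (\sum_(p <- s) `|p.1|)%:E.
Proof.
rewrite -[LHS]mul1e -integral_cst // ge0_integral_fin_measure // -sumEFin.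
by apply: eq_bigr => p _; rewrite mule1.
Qed.

Lemma sum_abs_weightsE s (F : 'cV[R]_n -> R) : all (fun p => 0 <= p.1) s ->
  \sum_(p <- s) `|p.1| * F p.2 = fin_mean s F.
Proof.
move=> /allP s_ge0; rewrite /fin_mean !big_seq; apply: eq_bigr => p /s_ge0 p_ge0.
by rewrite ger0_norm.
Qed.

Lemma fin_probE s : all (fun p => 0 <= p.1) s -> fin_mean s (fun=> 1) = 1 ->
  forall A, fin_prob s A = fin_measure s A.
Proof.
move=> s_ge0 s_mass A.
have mass1 : \sum_(p <- s) `|p.1| = 1.
  by rewrite -s_mass -sum_abs_weightsE //; apply: eq_bigr => p _; rewrite mulr1.
rewrite /fin_prob /= /mnormalize fin_measure_setT mass1 onee_eq0 /=.
by rewrite invr1 mule1.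
Qed.

Lemma integral_fin_prob s (g : Rvec R n -> R) :
  all (fun p => 0 <= p.1) s -> fin_mean s (fun=> 1) = 1 ->
  measurable_fun [set: Rvec R n] g ->
  (\int[fin_prob s]_x (g x)%:E = (fin_mean s g)%:E)%E.
Proof.
move=> s_ge0 s_mass g_meas; rewrite (eq_measure_integral (fin_measure s)).
  by rewrite integral_fin_measure // sum_abs_weightsE.
by move=> A _ _; exact: fin_probE.
Qed.

Lemma fin_prob_admissible s : fin_centered s ->
  (forall v, v != 0 -> 0 < fin_mean s (fun z => (v^T *m z) 0 0 ^+ 2)) ->
  admissible_error (fin_prob s).
Proof.
move=> [s_ge0 s_mass s_mean] s_posdef; split.
- apply/integrableP; split.
    by apply/measurable_EFinP; exact: sqr_norm_measurable.
  under eq_integral do rewrite abse_EFin.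
  rewrite integral_fin_prob //; first exact: ltry.
  apply: measurableT_comp; first exact: normr_measurable.
  exact: sqr_norm_measurable.
- by move=> i; rewrite integral_fin_prob ?s_mean //; exact: coord_measurable.
- exists 1, (second_moment s); split => //.
  + split; first exact: tr_second_moment.
    by move=> v /s_posdef; rewrite second_moment_quad.
  + move=> i j; rewrite integral_fin_prob ?second_momentE ?mul1r //.
    by apply: measurable_funM; exact: coord_measurable.
Qed.

Lemma admissible_null_fin_centered (g : Rvec R n -> R) :
  measurable_fun [set: Rvec R n] g ->
  (forall P : probability (Rvec R n) R, admissible_error P ->
     (\int[P]_e (g e)%:E = 0)%E) ->
  (0 < n)%N -> forall s, fin_centered s -> fin_mean s g = 0.
Proof.
move=> g_meas g_null n_gt0 s s_centered.
have basis_centered := sign_basis_centered R n_gt0.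
have fin_null s' : fin_centered s' ->
    (forall v, v != 0 -> 0 < fin_mean s' (fun z => (v^T *m z) 0 0 ^+ 2)) ->
    fin_mean s' g = 0.
  move=> s'_centered s'_posdef; have [s'_ge0 s'_mass _] := s'_centered.
  have := g_null _ (fin_prob_admissible s'_centered s'_posdef).
  by rewrite integral_fin_prob // => -[].
have basis_null := fin_null _ basis_centered (@sign_basis_quad_gt0 R n).
have mix_posdef v : v != 0 ->
    0 < fin_mean (fin_mix s (sign_basis R n)) (fun z => (v^T *m z) 0 0 ^+ 2).
  move=> v_neq0; rewrite fin_mean_mix divr_gt0 //.
  rewrite ltr_wpDl ?sign_basis_quad_gt0 //.
  by case: s_centered => s_ge0 _ _; apply: fin_mean_ge0 => // z; exact: sqr_ge0.
have := fin_null _ (fin_centered_mix s_centered basis_centered) mix_posdef.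
by rewrite fin_mean_mix basis_null => mix_null; lra.
Qed.

End FiniteProbability.

Theorem theorem3p4 (R : realType) (n k : nat) (X : 'M[R]_(n, k))
  (hk1 : (1 <= k)%N) (hkn : (k < n)%N) (hX : \rank X = k)
  (bhat : 'cV[R]_n -> 'cV[R]_k)
  (hmeas : measurable_fun [set: Rvec R n] (bhat : Rvec R n -> Rvec R k))
  (hunb : forall (beta : 'cV[R]_k) (Pe : probability (Rvec R n) R),
      admissible_error Pe ->
      forall j : 'I_k,
        Pe.-integrable [set: Rvec R n]
          (fun e : Rvec R n => (bhat (X *m beta + e) j 0)%:E) /\
        (\int[Pe]_e (bhat (X *m beta + e) j 0)%:E
           = (beta j 0)%:E)%E) :
  exists A : 'M[R]_(k, n), forall y : 'cV[R]_n, bhat y = A *m y.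
Proof.
have n_gt0 : (0 < n)%N := leq_ltn_trans (leq0n k) hkn.
have bhat_linear (j : 'I_k) y :
    bhat y j 0 = \sum_i y i 0 * bhat (delta_mx i 0) j 0.
  apply: (centered_null_linear (g := fun y => bhat y j 0)).
  apply: admissible_null_fin_centered n_gt0 => [|P P_adm].
    exact: measurableT_comp (coord_measurable j) hmeas.
  have := (hunb 0 P P_adm j).2.
  by under eq_integral do rewrite mulmx0 add0r; rewrite mxE.
exists (\matrix_(j, i) bhat (delta_mx i 0) j 0) => y.
apply/matrixP => j l; rewrite (ord1 l) bhat_linear mxE.
by apply: eq_bigr => i _; rewrite mxE mulrC.
Qed.
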